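(* Let $q$ be a prime power and let $A$ and $B$ be parity check matrices over $\mathbb{F}_q$ of the Hamming codes $[n_a,k_a,3]_q$ and $[n_b,k_b,3]_q$ respectively, where $n_a=(q^{m_a}-1)/(q-1)\ge3$, $n_b=(q^{m_b}-1)/(q-1)\ge3$, $k_a=n_a-m_a$, $k_b=n_b-m_b$. Let $C$ be the linear code over $\mathbb{F}_q$ with parity check matrix $H=A\otimes B$. Then: (1) $C$ has length $n=n_an_b$, dimension $k=n-m_am_b$ and minimum distance $d=3$; (2) the covering radius of $C$ is $\rho=\min\{m_a,m_b\}$; (3) $C$ is completely transitive, and therefore completely regular.
   Context: $A\otimes B$ denotes the Kronecker product (each entry $a_{r,s}$ of $A$ replaced by the block $a_{r,s}B$). The $q$-ary Hamming code with $m$ check symbols has a parity check matrix of size $m\times(q^m-1)/(q-1)$ whose columns are one nonzero representative of each one-dimensional subspace of $\mathbb{F}_q^m$. The covering radius of $C$ is $\max_{{\bf v}\in\mathbb{F}_q^n}\min_{{\bf c}\in C}\mathrm{wt}({\bf v}-{\bf c})$. The automorphism group $\mathrm{Aut}(C)$ consists of all $n\times n$ monomial matrices $M$ over $\mathbb{F}_q$ (exactly one nonzero entry in each row and column) with ${\bf c}M\in C$ for all ${\bf c}\in C$, together with (when $q$ is not prime) the field automorphisms of $\mathbb{F}_q$ preserving $C$ and their compositions; it acts on cosets by $\phi({\bf v}+C)=\phi({\bf v})+C$. A linear code with covering radius $\rho$ is completely transitive if $\mathrm{Aut}(C)$ has exactly $\rho+1$ orbits on the set of cosets of $C$. A code $C$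 is completely regular if for each $l\ge0$ every vector in $C(l)=\{{\bf x}:d({\bf x},C)=l\}$ has the same number $c_l$ of neighbors (vectors at Hamming distance 1) in $C(l-1)$ and the same number $b_l$ of neighbors in $C(l+1)$. *)

From HB Require Import structures.
From mathcomp Require Import all_boot all_order all_algebra all_field.
Set Implicit Arguments. Unset Strict Implicit. Unset Printing Implicit Defensive.
Import GRing.Theory.
Local Open Scope ring_scope.

Section Codes.
Variable F : finFieldType.

(* entry of a matrix at natural-number indices (0 outside the range) *)
Definition ent m n (A : 'M[F]_(m, n)) (r s : nat) : F :=
  match @insub _ (fun k => k < m)%N 'I_m r, @insub _ (fun k => k < n)%N 'I_n s with
  | Some i, Some j => A i j
  | _, _ => 0
  end.

(* Kronecker product: entry ((r*m2 + i), (s*n2 + j)) is a_{r,s} b_{i,j} *)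
Definition kron m1 n1 m2 n2 (A : 'M[F]_(m1, n1)) (B : 'M[F]_(m2, n2))
  : 'M[F]_(m1 * m2, n1 * n2) :=
  \matrix_(i, j) (ent A (i %/ m2) (j %/ n2) * ent B (i %% m2) (j %% n2)).

(* A is a parity check matrix of a q-ary Hamming code with m check symbols:
   its columns are nonzero, no two distinct columns span the same line, and
   every one-dimensional subspace of F^m is spanned by some column. *)
Definition hamming_pcm m n (A : 'M[F]_(m, n)) : Prop :=
  [/\ forall j : 'I_n, col j A != 0,
      forall (j1 j2 : 'I_n) (a : F), col j1 A = a *: col j2 A -> j1 = j2 &
      forall v : 'cV[F]_m, v != 0 -> exists (j : 'I_n) (a : F), v = a *: col j A].

Definition code r n (H : 'M[F]_(r, n)) : {set 'rV[F]_n} :=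
  [set c : 'rV[F]_n | c *m H^T == 0].

Definition wt n (v : 'rV[F]_n) : nat := #|[set j : 'I_n | v 0 j != 0]|.
Definition hdist n (u v : 'rV[F]_n) : nat := wt (u - v).

Definition min_distance n (C : {set 'rV[F]_n}) : nat :=
  \big[minn/n]_(c in C | c != 0) wt c.

(* distance from a vector to the code (n is an upper bound) *)
Definition dist_to n (C : {set 'rV[F]_n}) (v : 'rV[F]_n) : nat :=
  \big[minn/n]_(c in C) hdist v c.

Definition covering_radius n (C : {set 'rV[F]_n}) : nat :=
  \max_(v : 'rV[F]_n) dist_to C v.

Definition monomial n (M : 'M[F]_n) : bool :=
  [forall i, #|[set j | M i j != 0]| == 1%N] &&
  [forall j, #|[set i | M i j != 0]| == 1%N].

Definition field_aut (s : {ffun F -> F}) : bool :=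
  [forall x, forall y, (s (x + y) == s x + s y) && (s (x * y) == s x * s y)]
  && (s 1 == 1) && injectiveb s.

Definition preserves n (f : 'rV[F]_n -> 'rV[F]_n) (C : {set 'rV[F]_n}) : bool :=
  [forall c in C, f c \in C].

(* generators of Aut(C) acting on cosets: coset v + C is sent to coset w + C *)
Definition aut_step n (C : {set 'rV[F]_n}) : rel 'rV[F]_n := fun v w =>
  [exists M : 'M[F]_n,
      [&& monomial M, preserves (fun c => c *m M) C & v *m M - w \in C]]
  || [exists s : {ffun F -> F},
      [&& field_aut s, preserves (map_mx s) C & map_mx s v - w \in C]].

(* orbits of Aut(C) on the cosets, each orbit represented by the union of
   its cosets (the group generated is finite, so the reflexive-transitive
   closure of the generator steps is the orbit relation) *)
Definition aut_coset_orbits n (C : {set 'rV[F]_n}) : {set {set 'rV[F]_n}} :=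
  [set [set w | connect (aut_step C) v w] | v : 'rV[F]_n].

Definition completely_transitive n (C : {set 'rV[F]_n}) : Prop :=
  #|aut_coset_orbits C| = (covering_radius C).+1.

Definition completely_regular n (C : {set 'rV[F]_n}) : Prop :=
  (forall (l : nat) (x y : 'rV[F]_n), dist_to C x = l.+1 -> dist_to C y = l.+1 ->
     #|[set z | (hdist x z == 1%N) && (dist_to C z == l)]|
     = #|[set z | (hdist y z == 1%N) && (dist_to C z == l)]|) /\
  (forall (l : nat) (x y : 'rV[F]_n), dist_to C x = l -> dist_to C y = l ->
     #|[set z | (hdist x z == 1%N) && (dist_to C z == l.+1)]|
     = #|[set z | (hdist y z == 1%N) && (dist_to C z == l.+1)]|).

End Codes.

From HB Require Import structures.
From mathcomp Require Import all_boot all_order all_algebra all_field.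
From mathcomp.real_closed Require Import mxtens.
Import GRing.Theory.
Local Open Scope ring_scope.

Set Implicit Arguments. Unset Strict Implicit. Unset Printing Implicit Defensive.

(* Index the coordinates of F^(na*nb) by pairs, so that a vector v is an
   na x nb matrix V, its Hamming weight is the number of nonzero entries of V,
   and since H = A (x) B its syndrome is the ma x mb matrix S(v) = A V B^T.
   The whole proof rests on one identity:  d(v, C) = rank S(v).
   - (>=) every word of the coset v + C has syndrome S(v), and
     rank (A W B^T) <= rank W <= (number of nonzero entries of W);
   - (<=) write S(v) as a sum of rank S(v) rank-one matrices x y^T; as the
     columns of A and of B span every line, x y^T = A (a e_ij) B^T, so S(v)
     is the syndrome of a vector of weight at most rank S(v).
   Hence the covering radius is the largest rank, min ma mb.  Any two columns
   of a Hamming matrix are independent, which gives minimum distance 3.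
   For transitivity, syndromes of equal rank are related by S |-> P S Q^T with
   P, Q invertible; an invertible matrix permutes the lines spanned by the
   columns of A, i.e. A D = P A for a monomial D, and D1^T (x) D2^T is then a
   monomial automorphism of C relating the two cosets.  Conversely monomial
   maps and field automorphisms preserve weights and C, hence the rank: the
   orbits on cosets are the min ma mb + 1 rank classes.  The same automorphism
   matches the neighbours of two vectors at equal distance, which gives
   complete regularity. *)

Lemma bigminn_le (T : finType) (P : pred T) (f : T -> nat) d x :
  P x -> (\big[minn/d]_(i | P i) f i <= f x)%N.
Proof.
move=> Px; have : x \in index_enum T by rewrite mem_index_enum.
elim: (index_enum T) => [//|y s IHs]; rewrite big_cons inE => /orP[/eqP <-|/IHs le_fx].
  by rewrite Px geq_minl.
by case: ifP => _ //; apply: leq_trans (geq_minr _ _) le_fx.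
Qed.

Section DistanceToCode.
Variables (F : finFieldType) (n : nat).
Implicit Types (u v c : 'rV[F]_n) (C : {set 'rV[F]_n}).

Lemma wt_le_n v : (wt v <= n)%N.
Proof. by apply: leq_trans (max_card _) _; rewrite card_ord. Qed.

Lemma wt_eq0 v : (wt v == 0%N) = (v == 0).
Proof.
rewrite cards_eq0; apply/eqP/eqP => [supp0|->]; last first.
  by apply/setP => j; rewrite !inE mxE eqxx.
apply/rowP => j; rewrite mxE; apply/eqP; apply: contraT => vj_nz.
by have := in_set0 j; rewrite -supp0 inE vj_nz.
Qed.

Lemma dist_to_le C v c : c \in C -> (dist_to C v <= hdist v c)%N.
Proof. exact: bigminn_le. Qed.

Lemma dist_to_ge C v t : (t <= n)%N ->
  (forall c, c \in C -> t <= hdist v c)%N -> (t <= dist_to C v)%N.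
Proof.
move=> le_tn le_t_dist; apply: (big_ind (fun x => t <= x)%N) => // x y tx ty.
by rewrite leq_min tx ty.
Qed.

Lemma dist_to_le_n C v : (dist_to C v <= n)%N.
Proof.
apply: (big_ind (fun x => x <= n)%N) => // [x y le_xn _|c _]; last exact: wt_le_n.
exact: leq_trans (geq_minl _ _) le_xn.
Qed.

(* An additive, weight-preserving map that maps C into itself is an
   isometry permuting C, hence it preserves the distance to C. *)
Lemma dist_to_isometry C (f : 'rV[F]_n -> 'rV[F]_n) :
  (forall u v, f (u - v) = f u - f v) -> (forall v, wt (f v) = wt v) ->
  (forall c, c \in C -> f c \in C) -> forall v, dist_to C (f v) = dist_to C v.
Proof.
move=> fB fwt fC v.
have f_inj : injective f.
  move=> u w fuw; apply/eqP; rewrite -subr_eq0 -wt_eq0 -fwt fB fuw subrr.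
  by rewrite wt_eq0.
have fCE : f @: C = C.
  apply/eqP; rewrite eqEcard card_imset // leqnn andbT.
  by apply/subsetP => _ /imsetP[c Cc ->]; apply: fC.
apply/eqP; rewrite eqn_leq !dist_to_ge ?dist_to_le_n // => c Cc.
  have /imsetP[c' Cc' ->] : c \in f @: C by rewrite fCE.
  by rewrite /hdist -fB fwt; exact: dist_to_le.
by rewrite /hdist -fwt fB; exact: dist_to_le (fC _ Cc).
Qed.

End DistanceToCode.

(* Coordinates of F^(m*n) are indexed by pairs through mxtens_index, the
   indexing used by the Kronecker product A *t B; a vector is thus the
   flattening of an m x n matrix. *)
Section Flattening.
Variable F : finFieldType.

Definition mxflat m n (V : 'M[F]_(m, n)) : 'rV[F]_(m * n) :=
  \row_k V (@mxtens_unindex m n k).1 (@mxtens_unindex m n k).2.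

Definition mxunflat m n (v : 'rV[F]_(m * n)) : 'M[F]_(m, n) :=
  \matrix_(i, j) v 0 (@mxtens_index m n (i, j)).

Variables m n : nat.

Lemma mxflatK : cancel (@mxflat m n) (@mxunflat m n).
Proof. by move=> V; apply/matrixP => i j; rewrite !mxE mxtens_indexK. Qed.

Lemma mxunflatK : cancel (@mxunflat m n) (@mxflat m n).
Proof.
by move=> v; apply/rowP => k; rewrite !mxE -surjective_pairing mxtens_unindexK.
Qed.

Lemma mxunflatB (u v : 'rV[F]_(m * n)) : mxunflat (u - v) = mxunflat u - mxunflat v.
Proof. by apply/matrixP => i j; rewrite !mxE. Qed.

Lemma mxflat0 : mxflat (0 : 'M[F]_(m, n)) = 0.
Proof. by apply/rowP => k; rewrite !mxE. Qed.

Lemma sum_mxtens (R : nmodType) (g : 'I_(m * n) -> R) :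
  \sum_k g k = \sum_i \sum_j g (@mxtens_index m n (i, j)).
Proof.
rewrite pair_bigA /= (reindex (@mxtens_index m n)) /=.
  by apply: eq_bigr => -[i j].
by exists (@mxtens_unindex m n) => k _; rewrite (mxtens_indexK, mxtens_unindexK).
Qed.

Lemma mulmx_tens m' n' (P : 'M[F]_(m, m')) (Q : 'M[F]_(n, n')) v :
  v *m (P *t Q) = mxflat (P^T *m mxunflat v *m Q).
Proof.
apply/rowP => k; rewrite !mxE sum_mxtens exchange_big /=.
apply: eq_bigr => j _; rewrite !mxE big_distrl /=; apply: eq_bigr => i _.
by rewrite !mxE mxtens_indexK /= mulrA (mulrC (v _ _)).
Qed.

End Flattening.

Section MatrixWeight.
Variables (F : finFieldType) (m n : nat).
Implicit Types V W : 'M[F]_(m, n).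

Definition mx_wt V : nat := #|[set p : 'I_m * 'I_n | V p.1 p.2 != 0]|.

Lemma wt_mxflat V : wt (mxflat V) = mx_wt V.
Proof.
rewrite /wt /mx_wt -(card_imset _ (can_inj (@mxtens_indexK m n))).
apply: eq_card => k; rewrite inE mxE.
apply/idP/imsetP => [Vk_nz | [p Vp_nz ->]]; last by rewrite inE in Vp_nz; rewrite mxtens_indexK.
by exists (mxtens_unindex k); rewrite ?mxtens_unindexK // inE.
Qed.

Lemma mx_wtD V W : (mx_wt (V + W) <= mx_wt V + mx_wt W)%N.
Proof.
apply: leq_trans (leq_card_setU _ _); apply: subset_leq_card.
apply/subsetP => p; rewrite !inE mxE; apply: contraR.
by rewrite negb_or !negbK => /andP[/eqP-> /eqP->]; rewrite addr0.
Qed.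

Lemma mx_wt0 : mx_wt 0 = 0%N.
Proof. by apply/eqP; rewrite cards_eq0; apply/eqP/setP => p; rewrite !inE mxE eqxx. Qed.

Lemma mx_wt_sum (I : finType) (P : pred I) (Vs : I -> 'M[F]_(m, n)) :
  (mx_wt (\sum_(k | P k) Vs k) <= \sum_(k | P k) mx_wt (Vs k))%N.
Proof.
apply: (big_ind2 (fun V k => mx_wt V <= k)%N) => // [|V1 V2 k1 k2 le1 le2].
  by rewrite mx_wt0.
exact: leq_trans (mx_wtD _ _) (leq_add le1 le2).
Qed.

Lemma mx_wt_delta a i j : (mx_wt (a *: delta_mx i j : 'M[F]_(m, n)) <= 1)%N.
Proof.
rewrite -(cards1 (i, j)); apply: subset_leq_card; apply/subsetP => -[i' j'].
rewrite !inE !mxE /= xpair_eqE; apply: contraR.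
by case/nandP => /negbTE->; rewrite ?andbF mulr0 eqxx.
Qed.

Lemma mx_wt_eq0 V : mx_wt V = 0%N -> V = 0.
Proof.
move/eqP; rewrite cards_eq0 => /eqP supp0; apply/matrixP => i j; rewrite mxE.
by apply/eqP; apply: contraT => Vij_nz; have := in_set0 (i, j); rewrite -supp0 inE Vij_nz.
Qed.

(* A matrix is the sum of its nonzero entries placed at their positions. *)
Lemma rank_le_mx_wt V : (\rank V <= mx_wt V)%N.
Proof.
set supp := [set p : 'I_m * 'I_n | V p.1 p.2 != 0].
have decompV : V = \sum_(p in supp) V p.1 p.2 *: delta_mx p.1 p.2.
  rewrite {1}[V]matrix_sum_delta pair_bigA [RHS]big_mkcond /=.
  by apply: eq_bigr => -[i j] _; rewrite inE /=; case: eqP => // ->; rewrite scale0r.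
rewrite {1}decompV /mx_wt -/supp -sum1_card.
apply: (big_ind2 (fun M k => \rank M <= k)%N) => [|M1 M2 k1 k2 le1 le2|[i j] _].
- by rewrite mxrank0.
- exact: leq_trans (mxrank_add _ _) (leq_add le1 le2).
- by rewrite /= (leq_trans (mxrankS (scalemx_sub _ (submx_refl _)))) ?mxrank_delta.
Qed.

End MatrixWeight.

Section Monomial.
Variable F : finFieldType.

Lemma monomial_tr n (M : 'M[F]_n) : monomial M^T = monomial M.
Proof.
by rewrite /monomial andbC; congr (_ && _); apply: eq_forallb => i;
   congr (#|pred_of_set _| == _); apply/setP => j; rewrite !inE mxE.
Qed.

Lemma monomial_col n (M : 'M[F]_n) : monomial M ->
  forall j, exists i, forall i', (M i' j != 0) = (i' == i).
Proof.
case/andP => _ /forallP col1 j; have /cards1P[i supp_j] := col1 j.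
by exists i => i'; have := congr1 (fun X : {set 'I_n} => i' \in X) supp_j; rewrite !inE.
Qed.

Lemma monomial_wt n (M : 'M[F]_n) (v : 'rV[F]_n) : monomial M -> wt (v *m M) = wt v.
Proof.
move=> monoM; have [p supp_p] := fin_all_exists (monomial_col monoM).
have p_inj : injective p.
  rewrite -monomial_tr in monoM => j1 j2 pj12.
  have [j supp_j] := monomial_col monoM (p j1).
  have /eqP-> : j1 == j by rewrite -supp_j mxE supp_p.
  by apply/esym/eqP; rewrite -supp_j mxE pj12 supp_p.
have vM j : (v *m M) 0 j = v 0 (p j) * M (p j) j.
  rewrite mxE (bigD1 (p j)) //= big1 ?addr0 // => i /negbTE ne_i.
  by have := supp_p j i; rewrite ne_i => /negbFE/eqP->; rewrite mulr0.
rewrite /wt -[RHS](card_preimset _ p_inj); apply: eq_card => j.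
by rewrite !inE vM mulf_eq0 negb_or supp_p eqxx andbT.
Qed.

(* Weight preservation makes the action injective. *)
Lemma monomial_mulmx_inj n (M : 'M[F]_n) : monomial M -> injective (fun v : 'rV[F]_n => v *m M).
Proof.
move=> mono_M u v uvM; apply/eqP; rewrite -subr_eq0 -wt_eq0.
by rewrite -(monomial_wt _ mono_M) mulmxBl uvM subrr wt_eq0.
Qed.

Definition monomial_mx n (pi : 'I_n -> 'I_n) (al : 'I_n -> F) : 'M[F]_n :=
  \matrix_(k, r) (if k == pi r then al r else 0).

Lemma monomial_mxP n (pi : 'I_n -> 'I_n) (al : 'I_n -> F) :
  injective pi -> (forall r, al r != 0) -> monomial (monomial_mx pi al).
Proof.
move=> pi_inj al_nz; apply/andP; split; apply/forallP => k.
  rewrite -(cards1 k) -[#|[set k]|](card_preimset _ pi_inj); apply/eqP/eq_card => r.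
  by rewrite !inE mxE [pi r == k]eq_sym; case: (k =P pi r); rewrite ?al_nz ?eqxx.
apply/cards1P; exists (pi k); apply/setP => i; rewrite !inE mxE.
by case: (i =P pi k); rewrite ?al_nz ?eqxx.
Qed.

Lemma monomial_tens n1 n2 (M1 : 'M[F]_n1) (M2 : 'M[F]_n2) :
  monomial M1 -> monomial M2 -> monomial (M1 *t M2).
Proof.
have col_tens m1 m2 (N1 : 'M[F]_m1) (N2 : 'M[F]_m2) : monomial N1 -> monomial N2 ->
    [forall j, #|[set i | (N1 *t N2) i j != 0]| == 1%N].
  move=> mono1 mono2; apply/forallP => k; case: (mxtens_indexP k) => j1 j2.
  have [i1 supp1] := monomial_col mono1 j1; have [i2 supp2] := monomial_col mono2 j2.
  apply/cards1P; exists (mxtens_index (i1, i2)); apply/setP => l.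
  case: (mxtens_indexP l) => a b; rewrite !inE tensmxE mulf_eq0 negb_or supp1 supp2.
  by rewrite (can_eq (@mxtens_indexK _ _)) xpair_eqE.
move=> mono1 mono2; apply/andP; split; last exact: col_tens.
rewrite -monomial_tr in mono1; rewrite -monomial_tr in mono2; apply/forallP => k.
rewrite -(eqP (forallP (col_tens _ _ _ _ mono1 mono2) k)).
by apply/eqP/eq_card => l; rewrite !inE !mxE.
Qed.

End Monomial.

Section FieldAutomorphism.
Variables (F : finFieldType) (s : {ffun F -> F}).
Hypothesis aut_s : field_aut s.

Lemma field_autB x y : s (x - y) = s x - s y.
Proof.
case/andP: aut_s => /andP[/forallP hom_s _] _.
have sD u w : s (u + w) = s u + s w by have /forallP/(_ w)/andP[/eqP] := hom_s u.
have s0 : s 0 = 0 by apply: (addrI (s 0)); rewrite -sD !addr0.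
have sN u : s (- u) = - s u by apply: (addrI (s u)); rewrite -sD !subrr.
by rewrite sD sN.
Qed.

Lemma field_aut_wt n (v : 'rV[F]_n) : wt (map_mx s v) = wt v.
Proof.
have s_inj : injective s by case/andP: aut_s => _ /injectiveP.
have s0 : s 0 = 0 by rewrite -[X in s X](subrr 0) field_autB subrr.
by apply: eq_card => j; rewrite !inE mxE -{1}s0 (inj_eq s_inj).
Qed.

End FieldAutomorphism.

Section AutomorphismDistance.
Variables (F : finFieldType) (n : nat) (C : {set 'rV[F]_n}).

Lemma dist_to_monomial (M : 'M[F]_n) : monomial M ->
  {in C, forall c, c *m M \in C} -> forall v, dist_to C (v *m M) = dist_to C v.
Proof.
move=> mono_M pres_M; apply: dist_to_isometry => [u v|v|//].
  exact: mulmxBl.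
exact: monomial_wt.
Qed.

Lemma dist_to_field_aut (s : {ffun F -> F}) : field_aut s ->
  {in C, forall c, map_mx s c \in C} -> forall v, dist_to C (map_mx s v) = dist_to C v.
Proof.
move=> aut_s pres_s; apply: dist_to_isometry => [u v|v|//]; last exact: field_aut_wt.
by apply/rowP => j; rewrite !mxE field_autB.
Qed.

End AutomorphismDistance.

Section HammingMatrix.
Variables (F : finFieldType) (m n : nat) (A : 'M[F]_(m, n)).
Hypothesis hamA : hamming_pcm A.

Lemma hamming_col_nz j : col j A != 0.
Proof. by case: hamA. Qed.

Lemma hamming_col_inj j1 j2 a : col j1 A = a *: col j2 A -> j1 = j2.
Proof. by case: hamA => _ col_inj _; apply: col_inj. Qed.

Lemma hamming_col_span v : v != 0 -> exists j a, v = a *: col j A.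
Proof. by case: hamA => _ _; apply. Qed.

Lemma mulmx_colsE (u : 'cV[F]_n) : A *m u = \sum_j u j 0 *: col j A.
Proof.
by apply/colP => i; rewrite !mxE summxE; apply: eq_bigr => j _; rewrite !mxE mulrC.
Qed.

Lemma hamming_mul_onto p (S : 'M[F]_(m, p)) : exists U, A *m U = S.
Proof.
have col_preim (v : 'cV[F]_m) : exists u, A *m u = v.
  have [->|v_nz] := eqVneq v 0; first by exists 0; rewrite mulmx0.
  have [j [a ->]] := hamming_col_span v_nz.
  by exists (a *: delta_mx j 0); rewrite -scalemxAr -colE.
have [U_ AU_] := fin_all_exists (fun k => col_preim (col k S)).
exists (\matrix_(j, k) U_ k j 0); apply/matrixP => i k.
have /colP/(_ i) := AU_ k; rewrite !mxE => <-.
by apply: eq_bigr => j _; rewrite mxE.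
Qed.

Lemma hamming_col_indep j a : a *: col j A = 0 -> a = 0.
Proof. by move/eqP; rewrite scaler_eq0 (negbTE (hamming_col_nz j)) orbF => /eqP. Qed.

Lemma hamming_col_pair_indep j1 j2 a1 a2 : j1 != j2 ->
  a1 *: col j1 A + a2 *: col j2 A = 0 -> a1 = 0 /\ a2 = 0.
Proof.
move=> ne12 comb0; suff a1_0 : a1 = 0.
  by split=> //; move: comb0; rewrite a1_0 scale0r add0r => /hamming_col_indep.
apply: contraTeq isT => a1_nz.
have : col j1 A = (- (a2 / a1)) *: col j2 A.
  apply: (@scalerI _ _ a1) => //; rewrite scalerA mulrN mulrCA divff // mulr1.
  by rewrite scaleNr; apply/eqP; rewrite -addr_eq0 comb0.
by move/hamming_col_inj/eqP; rewrite (negbTE ne12).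
Qed.

Lemma hamming_kernel_support2 (u : 'cV[F]_n) j1 j2 :
  (forall j, u j 0 != 0 -> (j == j1) || (j == j2)) -> A *m u = 0 -> u = 0.
Proof.
move=> supp_u Au0; have u_out j : j != j1 -> j != j2 -> u j 0 = 0.
  by move=> ne1 ne2; apply/eqP; apply: contraT => /supp_u; rewrite (negbTE ne1) (negbTE ne2).
suff [u1 u2] : u j1 0 = 0 /\ u j2 0 = 0.
  apply/colP => j; rewrite mxE.
  by have [->//|ne1] := eqVneq j j1; have [->//|ne2] := eqVneq j j2; apply: u_out.
move: Au0; rewrite mulmx_colsE (bigD1 j1) //=.
have [e21|ne12] := eqVneq j2 j1.
  rewrite big1 ?addr0 => [/hamming_col_indep u1|j ne1]; first by rewrite e21.
  by rewrite u_out ?scale0r ?e21.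
rewrite (bigD1 j2) //= big1 ?addr0 => [|j /andP[ne1 ne2]].
  by apply: hamming_col_pair_indep; rewrite eq_sym.
by rewrite u_out ?scale0r.
Qed.

Lemma hamming_dependent_triple : (1 < n)%N -> exists i0 i1 k (a : F),
  [/\ i1 != i0, k != i0 & col i0 A + col i1 A = a *: col k A].
Proof.
move=> n_gt1; pose i0 : 'I_n := Ordinal (ltnW n_gt1); pose i1 : 'I_n := Ordinal n_gt1.
have ne10 : i1 != i0 by [].
have sum_nz : col i0 A + col i1 A != 0.
  apply/eqP; rewrite -[col i0 A]scale1r -[col i1 A]scale1r.
  by case/hamming_col_pair_indep; rewrite 1?eq_sym // => /eqP; rewrite oner_eq0.
have [k [a sum_k]] := hamming_col_span sum_nz.
exists i0, i1, k, a; split=> //; apply: contraNneq ne10 => k_i0.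
apply/eqP/(@hamming_col_inj _ _ (a - 1)).
by rewrite k_i0 in sum_k; rewrite scalerBl scale1r -sum_k addrC addKr.
Qed.

Lemma hamming_kernel_rows2 p (W : 'M[F]_(n, p)) j1 j2 :
  (forall r k, W r k != 0 -> (r == j1) || (r == j2)) -> A *m W = 0 -> W = 0.
Proof.
move=> supp_W AW0; apply/matrixP => r k; rewrite mxE.
have -> : W r k = col k W r 0 by rewrite mxE.
rewrite (@hamming_kernel_support2 (col k W) j1 j2) ?mxE // => [j|].
  by rewrite mxE; apply: supp_W.
by rewrite colE mulmxA AW0 mul0mx.
Qed.

(* An invertible P permutes the lines spanned by the columns of A, so its
   left action on A is realised by a monomial matrix acting on the right. *)
Lemma hamming_equivariant (P : 'M[F]_m) : P \in unitmx ->
  exists2 D : 'M[F]_n, monomial D & A *m D = P *m A.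
Proof.
move=> P_unit.
have PA_nz r : P *m col r A != 0.
  apply: contraNneq (hamming_col_nz r) => PAr0.
  by rewrite -(mulKmx P_unit (col r A)) PAr0 mulmx0.
have [f PA_f] := fin_all_exists (fun r => hamming_col_span (PA_nz r)).
have [al PA] := fin_all_exists (fun r => PA_f r).
have al_nz r : al r != 0.
  by apply: contraNneq (PA_nz r) => al0; rewrite PA al0 scale0r.
have f_inj : injective f.
  move=> r1 r2 f12; apply: (@hamming_col_inj _ _ (al r1 / al r2)).
  apply: (can_inj (mulKmx P_unit)); rewrite -scalemxAr !PA f12 scalerA divfK //.
exists (monomial_mx f al); first exact: monomial_mxP.
apply/matrixP => i r.
have -> : (P *m A) i r = (P *m col r A) i 0.
  by rewrite !mxE; apply: eq_bigr => j _; rewrite mxE.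
rewrite PA !mxE (bigD1 (f r)) //= big1 ?addr0 => [|k ne_k]; first by rewrite !mxE eqxx mulrC.
by rewrite !mxE (negbTE ne_k) mulr0.
Qed.

End HammingMatrix.

Lemma entE (F : finFieldType) m n (M : 'M[F]_(m, n)) (i : 'I_m) (j : 'I_n) :
  ent M i j = M i j.
Proof.
rewrite /ent; case: insubP => [i' _ /val_inj->|]; last by rewrite ltn_ord.
by case: insubP => [j' _ /val_inj->|]; last by rewrite ltn_ord.
Qed.

Lemma kron_tens (F : finFieldType) m1 n1 m2 n2 (A : 'M[F]_(m1, n1)) (B : 'M[F]_(m2, n2)) :
  kron A B = A *t B.
Proof. by apply/matrixP => k l; rewrite !mxE -!entE. Qed.

Lemma mulmx_col_row_sum (F : finFieldType) m k p (X : 'M[F]_(m, k)) (Y : 'M[F]_(k, p)) :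
  X *m Y = \sum_i col i X *m row i Y.
Proof.
apply/matrixP => a b; rewrite !mxE summxE; apply: eq_bigr => i _.
by rewrite !mxE big_ord1 !mxE.
Qed.

(* A set with at most two elements is contained in a pair (x0 is only used
   to name the pair when the set is empty). *)
Lemma card_le2_cover (T : finType) (X : {set T}) (x0 : T) :
  (#|X| <= 2)%N -> exists p1 p2, X \subset [set p1; p2].
Proof.
move=> card_X; have : [|| #|X| == 0%N, #|X| == 1%N | #|X| == 2%N].
  by move: card_X; case: #|X| => [|[|[|]]].
case/or3P => [/eqP/cards0_eq-> | /cards1P[x ->] | /cards2P[x [y [_ ->]]]].
- by exists x0, x0; apply: sub0set.
- by exists x, x; apply/subsetP => z; rewrite !inE => ->.
- by exists x, y.
Qed.

Lemma rank_equiv (F : fieldType) m n (S S' : 'M[F]_(m, n)) : \rank S = \rank S' ->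
  exists P Q, [/\ P \in unitmx, Q \in unitmx & P *m S *m Q^T = S'].
Proof.
move=> rankSS'.
exists (col_ebase S' *m invmx (col_ebase S)), (invmx (row_ebase S) *m row_ebase S')^T.
rewrite unitmx_tr !unitmx_mul !unitmx_inv !col_ebase_unit !row_ebase_unit trmxK.
split=> //; rewrite -[RHS]mulmx_ebase -rankSS'.
rewrite -[X in _ *m X *m _ = _]mulmx_ebase !mulmxA mulmxKV ?col_ebase_unit //.
by rewrite mulmxK ?row_ebase_unit.
Qed.

Section TensorProductCode.
Variables (F : finFieldType) (ma na mb nb : nat).
Variables (A : 'M[F]_(ma, na)) (B : 'M[F]_(mb, nb)).
Hypotheses (hamA : hamming_pcm A) (hamB : hamming_pcm B).
Local Notation C := (code (kron A B)).

Definition syndrome (v : 'rV[F]_(na * nb)) : 'M[F]_(ma, mb) :=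
  A *m mxunflat v *m B^T.

Lemma kron_syndrome v : v *m (kron A B)^T = mxflat (syndrome v).
Proof. by rewrite kron_tens trmx_tens mulmx_tens trmxK. Qed.

Lemma in_codeE v : (v \in C) = (syndrome v == 0).
Proof. by rewrite inE kron_syndrome -(mxflat0 F) (inj_eq (can_inj (@mxflatK _ _ _))). Qed.

Lemma syndromeB u v : syndrome (u - v) = syndrome u - syndrome v.
Proof. by rewrite /syndrome mxunflatB mulmxBr mulmxBl. Qed.

Lemma syndrome_mxflat V : syndrome (mxflat V) = A *m V *m B^T.
Proof. by rewrite /syndrome mxflatK. Qed.

Lemma syndrome_onto S : exists v, syndrome v = S.
Proof.
have [U AU] := hamming_mul_onto hamA S.
have [W BW] := hamming_mul_onto hamB U^T.
by exists (mxflat W^T); rewrite syndrome_mxflat -mulmxA -trmx_mul BW trmxK AU.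
Qed.

Lemma rank_kron : \rank (kron A B)^T = (ma * mb)%N.
Proof.
suff /eqP : row_full (kron A B)^T by [].
rewrite -sub1mx; apply/row_subP => i.
have [v syn_v] := syndrome_onto (mxunflat (delta_mx 0 i)).
by rewrite row1 -[delta_mx 0 i]mxunflatK -syn_v -kron_syndrome submxMl.
Qed.

(* Lower bound: v - c has the syndrome of v and weight at least its rank. *)
Lemma rank_syndrome_le_hdist v c : c \in C -> (\rank (syndrome v) <= hdist v c)%N.
Proof.
rewrite in_codeE => /eqP syn_c0.
have -> : syndrome v = syndrome (v - c) by rewrite syndromeB syn_c0 subr0.
rewrite /syndrome /hdist -[v - c]mxunflatK wt_mxflat; apply: leq_trans (rank_le_mx_wt _).
by rewrite mxflatK; exact: leq_trans (mxrankM_maxl _ _) (mxrankM_maxr _ _).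
Qed.

(* Every rank-one syndrome is the syndrome of a vector of weight one, since
   the columns of A (resp. B) span all lines. *)
Lemma syndrome_rank_one (x : 'cV[F]_ma) (y : 'rV[F]_mb) :
  exists2 W, A *m W *m B^T = x *m y & (mx_wt W <= 1)%N.
Proof.
have [->|x_nz] := eqVneq x 0; first by exists 0; rewrite ?mulmx0 ?mul0mx ?mx_wt0.
have [->|y_nz] := eqVneq y 0; first by exists 0; rewrite ?mulmx0 ?mul0mx ?mx_wt0.
have [i [a ->]] := hamming_col_span hamA x_nz.
have yT_nz : y^T != 0 by apply: contraNneq y_nz => yT0; rewrite -[y]trmxK yT0 trmx0.
have [j [b y_b]] := hamming_col_span hamB yT_nz.
exists ((a * b) *: delta_mx i j); last exact: mx_wt_delta.
have -> : y = b *: row j B^T by rewrite -[y]trmxK y_b linearZ /= tr_col.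
rewrite -(mul_delta_mx (0 : 'I_1)) -scalemxAr -scalemxAl mulmxA -colE.
by rewrite -scalemxAl -mulmxA -rowE -scalemxAr scalerA.
Qed.

(* Summing over a rank decomposition, every syndrome S is the syndrome of a
   vector of weight at most rank S. *)
Lemma syndrome_sparse_preimage S : exists2 W, A *m W *m B^T = S & (mx_wt W <= \rank S)%N.
Proof.
have [W_ AWB_ wt_W_] := fin_all_exists2 (fun i =>
  syndrome_rank_one (col i (col_base S)) (row i (row_base S))).
exists (\sum_i W_ i).
  rewrite mulmx_sumr mulmx_suml -[RHS]mulmx_base mulmx_col_row_sum.
  by apply: eq_bigr => i _; apply: AWB_.
apply: leq_trans (mx_wt_sum _ _) _; rewrite -[X in (_ <= X)%N]card_ord -sum1_card.
exact: leq_sum.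
Qed.

Lemma dist_to_rank v : dist_to C v = \rank (syndrome v).
Proof.
apply/eqP; rewrite eqn_leq; apply/andP; split; last first.
  apply: dist_to_ge => [|c /rank_syndrome_le_hdist//].
  have C0 : 0 \in C by rewrite inE mul0mx.
  exact: leq_trans (rank_syndrome_le_hdist v C0) (wt_le_n _).
have [W AWB rank_W] := syndrome_sparse_preimage (syndrome v).
have C_vW : v - mxflat W \in C by rewrite in_codeE syndromeB syndrome_mxflat AWB subrr.
apply: leq_trans (dist_to_le _ C_vW) _.
by rewrite /hdist opprB addrC subrK wt_mxflat.
Qed.

(* Syndromes range over all ma x mb matrices, whose ranks are 0..min ma mb. *)
Lemma covering_radius_kron : covering_radius C = minn ma mb.
Proof.
apply/eqP; rewrite eqn_leq; apply/andP; split.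
  apply/bigmax_leqP => v _.
  by rewrite dist_to_rank leq_min rank_leq_row rank_leq_col.
have [v syn_v] := syndrome_onto (pid_mx (minn ma mb)).
apply: leq_trans (leq_bigmax v).
by rewrite dist_to_rank syn_v rank_pid_mx ?geq_minl ?geq_minr.
Qed.

(* A nonzero codeword has weight at least 3: if the matrix V of a codeword
   has at most two nonzero entries, then the rows of V B^T lie in at most two
   positions, so A V B^T = 0 forces V B^T = 0, and likewise V = 0. *)
Lemma kron_code_wt_ge3 c : c \in C -> c != 0 -> (3 <= wt c)%N.
Proof.
rewrite in_codeE /syndrome -[c]mxunflatK wt_mxflat mxflatK => /eqP AVB0 c_nz.
set V := mxunflat c in AVB0 c_nz *; rewrite leqNgt ltnS.
apply: contra c_nz => wt_V; have [/mx_wt_eq0->|] := posnP (mx_wt V); first by rewrite mxflat0.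
case/card_gt0P => x0 _; have [p1 [p2 /subsetP supp_V]] := card_le2_cover x0 wt_V.
have V_supp i j : V i j != 0 -> ((i, j) == p1) || ((i, j) == p2).
  by move=> Vij_nz; have := supp_V (i, j); rewrite !inE; apply.
have VB0 : V *m B^T = 0.
  apply: (hamming_kernel_rows2 hamA (j1 := p1.1) (j2 := p2.1)); last by rewrite mulmxA.
  move=> i k; rewrite mxE; apply: contraR; rewrite negb_or => /andP[ne1 ne2].
  apply/eqP/big1 => j _; have [->|/V_supp] := eqVneq (V i j) 0; first by rewrite mul0r.
  by case/orP => /eqP pE; rewrite -pE eqxx in ne1 ne2.
suff VT0 : V^T = 0 by rewrite -[V]trmxK VT0 trmx0 mxflat0.
apply: (hamming_kernel_rows2 hamB (j1 := p1.2) (j2 := p2.2)).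
  by move=> j i; rewrite mxE => /V_supp /orP[] /eqP <-; rewrite eqxx ?orbT.
by rewrite -[B]trmxK -trmx_mul VB0 trmx0.
Qed.

(* A word of weight 3: two columns of A summing to a multiple of a third. *)
Lemma kron_code_wt3 : (1 < na)%N -> (0 < nb)%N ->
  exists2 c, c \in C & (c != 0) && (wt c <= 3)%N.
Proof.
move=> na_gt1 nb_gt0; pose j0 : 'I_nb := Ordinal nb_gt0.
have [i0 [i1 [k [a [ne10 nek0 sum_k]]]]] := hamming_dependent_triple hamA na_gt1.
pose u : 'cV[F]_na := delta_mx i0 0 + delta_mx i1 0 - a *: delta_mx k 0.
pose V := u *m delta_mx 0 j0.
have Au0 : A *m u = 0 by rewrite mulmxBr mulmxDr -scalemxAr -!colE sum_k subrr.
exists (mxflat V); first by rewrite in_codeE syndrome_mxflat mulmxA Au0 !mul0mx.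
have V_delta : V = delta_mx i0 j0 + delta_mx i1 j0 - a *: delta_mx k j0.
  by rewrite /V /u mulmxBl mulmxDl -scalemxAl !mul_delta_mx.
apply/andP; split.
  rewrite V_delta; apply/eqP => /rowP/(_ (mxtens_index (i0, j0))).
  rewrite !mxE mxtens_indexK /= !eqxx ![i0 == _]eq_sym (negbTE ne10) (negbTE nek0).
  by rewrite mulr0 subr0 addr0 => /eqP; rewrite oner_eq0.
rewrite wt_mxflat V_delta -scaleNr; apply: leq_trans (mx_wtD _ _) _.
have wt_delta i j : (mx_wt (delta_mx i j : 'M[F]_(na, nb)) <= 1)%N.
  by rewrite -[delta_mx i j]scale1r mx_wt_delta.
rewrite -[3%N]/((1 + 1) + 1)%N; apply: leq_add (mx_wt_delta _ _ _).
exact: leq_trans (mx_wtD _ _) (leq_add (wt_delta _ _) (wt_delta _ _)).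
Qed.

Lemma min_distance_kron : (1 < na)%N -> (0 < nb)%N -> min_distance C = 3%N.
Proof.
move=> na_gt1 nb_gt0; have [c0 C_c0 /andP[c0_nz wt_c0]] := kron_code_wt3 na_gt1 nb_gt0.
apply/eqP; rewrite eqn_leq; apply/andP; split.
  by apply: leq_trans wt_c0; apply: bigminn_le; rewrite C_c0.
apply: (big_ind (fun x => 3 <= x)%N) => [|x y le3x le3y|c /andP[]].
- exact: leq_trans (kron_code_wt_ge3 C_c0 c0_nz) (wt_le_n _).
- by rewrite leq_min le3x.
- exact: kron_code_wt_ge3.
Qed.

Lemma syndrome_monomial D1 D2 P Q v : A *m D1 = P *m A -> B *m D2 = Q *m B ->
  syndrome (v *m (D1^T *t D2^T)) = P *m syndrome v *m Q^T.
Proof.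
move=> AD1 BD2; rewrite /syndrome mulmx_tens mxflatK trmxK !mulmxA AD1.
by rewrite -!mulmxA -trmx_mul BD2 trmx_mul.
Qed.

Lemma monomial_aut_of_rank v w : \rank (syndrome v) = \rank (syndrome w) ->
  exists M, [/\ monomial M, preserves (mulmx^~ M) C & syndrome (v *m M) = syndrome w].
Proof.
case/rank_equiv => P [Q [P_unit Q_unit PSQ]].
have [D1 mono1 AD1] := hamming_equivariant hamA P_unit.
have [D2 mono2 BD2] := hamming_equivariant hamB Q_unit.
exists (D1^T *t D2^T); split; first by rewrite monomial_tens ?monomial_tr.
  apply/forall_inP => c; rewrite !in_codeE (syndrome_monomial _ AD1 BD2) => /eqP->.
  by rewrite mulmx0 mul0mx.
by rewrite (syndrome_monomial _ AD1 BD2).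
Qed.

Lemma aut_step_of_rank v w : \rank (syndrome v) = \rank (syndrome w) -> aut_step C v w.
Proof.
case/monomial_aut_of_rank => M [mono_M pres_M syn_vM]; apply/orP; left.
by apply/existsP; exists M; rewrite mono_M pres_M in_codeE syndromeB syn_vM subrr /=.
Qed.

Lemma rank_syndrome_coset u w : u - w \in C -> \rank (syndrome w) = \rank (syndrome u).
Proof. by rewrite in_codeE syndromeB subr_eq0 => /eqP->. Qed.

(* Each generator of Aut(C) preserves the distance to C, i.e. the rank. *)
Lemma rank_aut_step v w : aut_step C v w -> \rank (syndrome w) = \rank (syndrome v).
Proof.
case/orP => [/existsP[M /and3P[mono_M /forall_inP pres_M C_vMw]]
            |/existsP[s /and3P[aut_s /forall_inP pres_s C_svw]]].
  by rewrite (rank_syndrome_coset C_vMw) -!dist_to_rank dist_to_monomial.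
by rewrite (rank_syndrome_coset C_svw) -!dist_to_rank dist_to_field_aut.
Qed.

Lemma aut_orbitE v :
  [set w | connect (aut_step C) v w] = [set w | \rank (syndrome w) == \rank (syndrome v)].
Proof.
apply/setP => w; rewrite !inE; apply/idP/eqP => [|rank_w]; last first.
  by apply: connect1; apply: aut_step_of_rank.
have rank_closed : closed (aut_step C) [pred u | \rank (syndrome u) == \rank (syndrome v)].
  by move=> x y /rank_aut_step rank_y; rewrite !inE rank_y.
by move/(closed_connect rank_closed); rewrite !inE eqxx => /esym/eqP.
Qed.

Lemma card_aut_coset_orbits : #|aut_coset_orbits C| = (minn ma mb).+1.
Proof.
pose rank_class (t : nat) := [set w | \rank (syndrome w) == t].
have rank_reached t : (t <= minn ma mb)%N -> exists v, \rank (syndrome v) = t.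
  move=> le_t; have [v syn_v] := syndrome_onto (pid_mx t); exists v.
  by rewrite syn_v rank_pid_mx // (leq_trans le_t) ?geq_minl ?geq_minr.
have -> : aut_coset_orbits C = [set rank_class t | t : 'I_(minn ma mb).+1].
  apply/setP => X; apply/imsetP/imsetP => [[v _ ->]|[t _ ->]].
    exists (inord (\rank (syndrome v))); rewrite // aut_orbitE inordK //.
    by rewrite ltnS leq_min rank_leq_row rank_leq_col.
  by have [v rank_v] := rank_reached t (ltn_ord t); exists v; rewrite ?aut_orbitE ?rank_v.
rewrite card_imset ?card_ord // => t1 t2 class12; apply: val_inj.
have [v rank_v] := rank_reached t1 (ltn_ord t1).
have : v \in rank_class t1 by rewrite inE rank_v.
by rewrite class12 inE rank_v => /eqP.
Qed.

(* Vectors at the same distance from C have equally many neighbours at any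
   given distance: the automorphism moving the coset of x to that of y maps
   the neighbours of x bijectively onto neighbours of y at the same distance. *)
Lemma neighbours_card_le x y l : dist_to C x = dist_to C y ->
  (#|[set z | (hdist x z == 1%N) && (dist_to C z == l)]|
   <= #|[set z | (hdist y z == 1%N) && (dist_to C z == l)]|)%N.
Proof.
rewrite !dist_to_rank => /monomial_aut_of_rank[M [mono_M /forall_inP pres_M syn_xM]].
pose phi z := z *m M - (x *m M - y).
have phi_inj : injective phi by move=> z1 z2 /addIr/(monomial_mulmx_inj mono_M).
rewrite -(card_imset _ phi_inj); apply: subset_leq_card; apply/subsetP => w /imsetP[z].
rewrite !inE => /andP[hdist_xz dist_z] ->.
have -> : hdist y (phi z) = hdist x z.
  by rewrite /hdist /phi -(monomial_wt (x - z) mono_M) mulmxBl opprB addrC addrAC subrK.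
rewrite hdist_xz -(eqP dist_z) !dist_to_rank (@rank_syndrome_coset (z *m M)).
  by rewrite -!dist_to_rank (dist_to_monomial mono_M pres_M) eqxx.
by rewrite /phi opprB addrC addrNK in_codeE syndromeB syn_xM subrr.
Qed.

Lemma kron_code_completely_regular : completely_regular C.
Proof.
by split=> l x y dist_x dist_y; apply/eqP; rewrite eqn_leq !neighbours_card_le ?dist_x ?dist_y.
Qed.

End TensorProductCode.

Unset Implicit Arguments. Set Strict Implicit.

Theorem theorem1 (F : finFieldType) (ma na mb nb : nat)
    (A : 'M[F]_(ma, na)) (B : 'M[F]_(mb, nb)) :
  hamming_pcm A -> hamming_pcm B ->
  na = ((#|F| ^ ma).-1 %/ (#|F|).-1)%N ->
  nb = ((#|F| ^ mb).-1 %/ (#|F|).-1)%N ->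
  (3 <= na)%N -> (3 <= nb)%N ->
  let H := kron A B in
  let C := code H in
  [/\ \rank (kermx H^T) = (na * nb - ma * mb)%N,
      min_distance C = 3%N,
      covering_radius C = minn ma mb,
      completely_transitive C &
      completely_regular C].
Proof.
move=> hamA hamB _ _ na_ge3 nb_ge3 H C; split.
- by rewrite mxrank_ker (rank_kron hamA hamB).
- exact: min_distance_kron hamA hamB (ltnW na_ge3) (ltnW (ltnW nb_ge3)).
- exact: covering_radius_kron hamA hamB.
- by rewrite /completely_transitive (covering_radius_kron hamA hamB) card_aut_coset_orbits.
- exact: kron_code_completely_regular hamA hamB.
Qed.
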